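(* Let $(\phi,F)$ be a special Kähler pair of an affine special Kähler manifold $M$ (of complex dimension $n$), $(z,w):=\phi$. Let $\hat M:=\mathbb{C}^*\times M$ with $\mathbb{C}^*$-action $\lambda\cdot(z^0,p)=(\lambda z^0,p)$. Then $$\Phi:\hat M\to\mathbb{C}^{2n+2},\qquad \Phi(z^0,p)=z^0\big(1,\,(2F-z^tw)(p),\,\phi(p)\big)$$ is a $\mathbb{C}^*$-equivariant Lagrangian immersion (with respect to $\hat\Omega=dz^0\wedge dw_0+\sum dz^i\wedge dw_i$ on $\mathbb{C}^{2n+2}$ with coordinates $(z^0,w_0,z,w)$).
   Context: $\mathbb{C}^{2n}$: coordinates $(z,w)$, $\Omega=\sum dz^i\wedge dw_i$, $\tau$ complex conjugation, $\gamma=\sqrt{-1}\Omega(\cdot,\tau\cdot)$, Liouville form $\lambda=\sum w_idz^i$. Affine special Kähler manifold $(M,J,g,\nabla)$: pseudo-Kähler with $\omega=g(\cdot,J\cdot)$ and flat torsion-free $\nabla$ with $\nabla\omega=0$, $d^\nabla J=0$. A special Kähler pair of an open $U\subset M$ is $(\phi,F)$ where $\phi:U\to\mathbb{C}^{2n}$ is a holomorphic immersion with $\phi^*\Omega=0$ and $\phi^*\gamma$ non-degenerate, inducing the given structure ($g=\mathrm{Re}\,\phi^*\gamma$, $\nabla$ the flat connection making $\mathrm{Re}\,\phi$'s components affine), and $F:U\to\mathbb{C}$ holomorphic with $dF=\phi^*\lambda$. *)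

From HB Require Import structures.
From mathcomp Require Import all_boot all_order all_algebra.
From mathcomp Require Import reals.
From mathcomp Require Import complex.
Set Implicit Arguments. Unset Strict Implicit. Unset Printing Implicit Defensive.
Import Order.TTheory GRing.Theory Num.Theory.
Local Open Scope ring_scope.

Section Defs.
Variable R : realType.
Local Notation C := R[i].

Definition cnorm (k : nat) (v : 'rV[C]_k) : C := \sum_(i < k) `|v 0 i|.

Definition copen (k : nat) (U : 'rV[C]_k -> Prop) : Prop :=
  forall p, U p -> exists2 r : R, 0 < r &
    forall q, cnorm (q - p) < (r%:C)%C -> U q.

Definition has_cderiv (k m : nat) (f : 'rV[C]_k -> 'rV[C]_m) (p : 'rV[C]_k)
  (L : 'M[C]_(k, m)) : Prop :=
  forall eps : R, 0 < eps -> exists2 delta : R, 0 < delta &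
    forall h : 'rV[C]_k, cnorm h < (delta%:C)%C ->
      cnorm (f (p + h) - f p - h *m L) <= (eps%:C)%C * cnorm h.

Definition holo_on (k m : nat) (U : 'rV[C]_k -> Prop)
  (f : 'rV[C]_k -> 'rV[C]_m) (df : 'rV[C]_k -> 'M[C]_(k, m)) : Prop :=
  forall p, U p -> has_cderiv f p (df p).

Definition zpart (k : nat) (x : 'rV[C]_(k + k)) : 'rV[C]_k := lsubmx x.
Definition wpart (k : nat) (x : 'rV[C]_(k + k)) : 'rV[C]_k := rsubmx x.

Definition Omega (k : nat) (a b : 'rV[C]_(k + k)) : C :=
  \sum_(i < k) (zpart a 0 i * wpart b 0 i - zpart b 0 i * wpart a 0 i).

Definition gamma (k : nat) (a b : 'rV[C]_(k + k)) : C :=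
  ('i)%C * Omega a (map_mx (fun z : C => z^*) b).

(* Liouville form lambda = sum_i w_i dz^i at the point x, applied to a *)
Definition liouville (k : nat) (x a : 'rV[C]_(k + k)) : C :=
  \sum_(i < k) wpart x 0 i * zpart a 0 i.

(* special Kaehler pair on an open set U of a chart C^n of M *)
Definition special_kaehler_pair (n : nat) (U : 'rV[C]_n -> Prop)
  (phi : 'rV[C]_n -> 'rV[C]_(n + n)) (dphi : 'rV[C]_n -> 'M[C]_(n, n + n))
  (F : 'rV[C]_n -> 'rV[C]_1) (dF : 'rV[C]_n -> 'M[C]_(n, 1)) : Prop :=
  [/\ holo_on U phi dphi,
      (forall p, U p -> row_free (dphi p)),
      (forall p, U p -> forall u v : 'rV[C]_n,
          Omega (u *m dphi p) (v *m dphi p) = 0),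
      (forall p, U p -> forall u : 'rV[C]_n,
          (forall v : 'rV[C]_n, gamma (u *m dphi p) (v *m dphi p) = 0) -> u = 0) &
      holo_on U F dF /\
      (forall p, U p -> forall u : 'rV[C]_n,
          (u *m dF p) 0 0 = liouville (phi p) (u *m dphi p))].

(* The map Phi on \hat M = C^* x U, a point being q = (z^0, p) in C^(1+n).
   Target C^(2n+2) = C^((1+n)+(1+n)) with z-coordinates (z^0, z) and
   w-coordinates (w_0, w), so that Omega on it is \hat Omega. *)
Definition z0of (n : nat) (q : 'rV[C]_(1 + n)) : C := lsubmx q 0 0.
Definition ptof (n : nat) (q : 'rV[C]_(1 + n)) : 'rV[C]_n := rsubmx q.

Definition Mhat (n : nat) (U : 'rV[C]_n -> Prop) (q : 'rV[C]_(1 + n)) : Prop :=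
  z0of q != 0 /\ U (ptof q).

Definition Phi (n : nat) (phi : 'rV[C]_n -> 'rV[C]_(n + n))
  (F : 'rV[C]_n -> 'rV[C]_1) (q : 'rV[C]_(1 + n)) : 'rV[C]_((1 + n) + (1 + n)) :=
  let z0 := z0of q in
  let p := ptof q in
  let z := zpart (phi p) in
  let w := wpart (phi p) in
  z0 *: row_mx (row_mx (1 : 'rV[C]_1) z)
               (row_mx ((2 : C) *: F p - (z *m w^T)) w).

Definition cstar_act (n : nat) (l : C) (q : 'rV[C]_(1 + n)) : 'rV[C]_(1 + n) :=
  row_mx (l *: lsubmx q) (rsubmx q).

End Defs.

(* Write Phi (z0, p) = z0 Phi1 p with Phi1 p = (1, z, 2F - z.w, w)(p).  Then
   dPhi (t, v) = t Phi1 p + z0 dPhi1 v, whose first coordinate is t: so dPhi is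
   injective as soon as z0 <> 0 and dphi is.  For isotropy, Omega (dPhi1 u, dPhi1 v)
   = Omega (dphi u, dphi v) = 0 since the first coordinates of dPhi1 vanish, and
   Omega (Phi1, dPhi1 v) = d(2F - z.w) v - dz(v).w + z.dw(v) = 2 (dF - w.dz) v = 0
   because dF = phi^* lambda. *)

From HB Require Import structures.
From mathcomp Require Import all_boot all_order all_algebra.
From mathcomp Require Import reals complex.
From mathcomp Require Import lra ring.
Import Order.TTheory GRing.Theory Num.Theory.
Local Open Scope ring_scope.
Set Implicit Arguments. Unset Strict Implicit. Unset Printing Implicit Defensive.

Lemma ler_mul_divDr1 (R : realFieldType) (M e : R) :
  0 <= M -> 0 <= e -> M * (e / (M + 1)) <= e.
Proof.
move=> M0 e0; have M1 : 0 < M + 1 by rewrite ltr_wpDl.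
by rewrite mulrA ler_pdivrMr // mulrC ler_wpM2l // lerDl.
Qed.

Section L1Norm.
Variable R : realType.
Local Notation C := R[i].
Local Notation normc := (@Normc.normc R).

Lemma normc_ge0 (x : C) : 0 <= normc x.
Proof. exact: (@normr_ge0 _ (Rcomplex R)). Qed.

Lemma normc_sum k (F : 'I_k -> C) : normc (\sum_i F i) <= \sum_i normc (F i).
Proof. exact: (@ler_norm_sum _ (Rcomplex R)). Qed.

Definition rnorm k (v : 'rV[C]_k) : R := \sum_(i < k) normc (v 0 i).
Definition mxnorm k m (L : 'M[C]_(k, m)) : R := \sum_(i < k) \sum_(j < m) normc (L i j).

Lemma cnormE k (v : 'rV[C]_k) : cnorm v = ((rnorm v)%:C)%C.
Proof. by rewrite /cnorm /rnorm rmorph_sum. Qed.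

Lemma rnorm_ge0 k (v : 'rV[C]_k) : 0 <= rnorm v.
Proof. by apply: sumr_ge0 => i _; exact: normc_ge0. Qed.

Lemma mxnorm_ge0 k m (L : 'M[C]_(k, m)) : 0 <= mxnorm L.
Proof. by apply: sumr_ge0 => i _; apply: sumr_ge0 => j _; exact: normc_ge0. Qed.

Lemma rnorm0 k : rnorm (0 : 'rV[C]_k) = 0.
Proof. by rewrite /rnorm big1 // => i _; rewrite mxE Normc.normc0. Qed.

Lemma rnormD k (a b : 'rV[C]_k) : rnorm (a + b) <= rnorm a + rnorm b.
Proof. rewrite /rnorm -big_split /=; apply: ler_sum => i _; rewrite mxE; exact: le_normcD. Qed.

Lemma rnormZ k c (a : 'rV[C]_k) : rnorm (c *: a) = normc c * rnorm a.
Proof. by rewrite /rnorm mulr_sumr; apply: eq_bigr => i _; rewrite mxE Normc.normcM. Qed.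

Lemma rnorm11 (x : 'rV[C]_1) : rnorm x = normc (x 0 0).
Proof. by rewrite /rnorm big_ord1. Qed.

Lemma normc_le_rnorm k (v : 'rV[C]_k) i : normc (v 0 i) <= rnorm v.
Proof. by rewrite /rnorm (bigD1 i) //= lerDl; apply: sumr_ge0 => j _; exact: normc_ge0. Qed.

Lemma rnorm_mulmx k m (h : 'rV[C]_k) (L : 'M[C]_(k, m)) :
  rnorm (h *m L) <= mxnorm L * rnorm h.
Proof.
rewrite /rnorm /mxnorm exchange_big /= mulr_suml; apply: ler_sum => j _.
rewrite mxE; apply: le_trans (normc_sum _) _; rewrite mulr_suml.
apply: ler_sum => i _; rewrite Normc.normcM mulrC.
by apply: ler_wpM2l; [exact: normc_ge0 | exact: normc_le_rnorm].
Qed.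

End L1Norm.

Section Derivative.
Variable R : realType.
Local Notation C := R[i].

Definition near0 k (P : 'rV[C]_k -> Prop) : Prop :=
  exists2 d : R, 0 < d & forall h, rnorm h < d -> P h.

Lemma near0_mono k (P Q : 'rV[C]_k -> Prop) :
  (forall h, P h -> Q h) -> near0 P -> near0 Q.
Proof. by move=> PQ [d d0 HP]; exists d => // h /HP /PQ. Qed.

Lemma near0_and k (P Q : 'rV[C]_k -> Prop) :
  near0 P -> near0 Q -> near0 (fun h => P h /\ Q h).
Proof.
move=> [d1 d10 HP] [d2 d20 HQ]; exists (Num.min d1 d2); first by rewrite lt_min d10 d20.
by move=> h; rewrite lt_min => /andP[/HP ? /HQ ?].
Qed.

Lemma near0_lt {k} (r : R) : 0 < r -> near0 (fun h : 'rV[C]_k => rnorm h < r).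
Proof. by exists r. Qed.

Lemma near0_mulmx k m (P : 'rV[C]_m -> Prop) (A : 'M[C]_(k, m)) :
  near0 P -> near0 (fun h => P (h *m A)).
Proof.
move=> [d d0 HP]; have A0 := mxnorm_ge0 A.
exists (d / (mxnorm A + 1)); first by rewrite divr_gt0 // ltr_wpDl.
move=> h hd; apply: HP; apply: le_lt_trans (rnorm_mulmx _ _) _.
rewrite ltr_pdivlMr ?ltr_wpDl // in hd; apply: le_lt_trans hd.
by rewrite mulrC ler_wpM2l ?rnorm_ge0 // lerDl.
Qed.

Definition is_cderiv k m (f : 'rV[C]_k -> 'rV[C]_m) p (L : 'M[C]_(k, m)) : Prop :=
  forall eps : R, 0 < eps ->
    near0 (fun h => rnorm (f (p + h) - f p - h *m L) <= eps * rnorm h).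

Lemma is_cderivP k m (f : 'rV[C]_k -> 'rV[C]_m) p L : is_cderiv f p L <-> has_cderiv f p L.
Proof.
split=> H eps /H [d d0 Hd]; exists d => // h.
  by rewrite !cnormE -rmorphM ltcR lecR; exact: Hd.
by have := Hd h; rewrite !cnormE -rmorphM ltcR lecR.
Qed.

Lemma is_cderiv_ext k m (f g : 'rV[C]_k -> 'rV[C]_m) p L :
  f =1 g -> is_cderiv f p L -> is_cderiv g p L.
Proof. by move=> fg Hf eps /Hf; apply: near0_mono => h; rewrite -!fg. Qed.

Lemma is_cderiv_linear k m (f : 'rV[C]_k -> 'rV[C]_m) p L :
  (forall h, f (p + h) - f p = h *m L) -> is_cderiv f p L.
Proof.
move=> fL eps e0; exists 1 => // h _.
by rewrite fL subrr rnorm0 mulr_ge0 ?rnorm_ge0 // ltW.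
Qed.

Lemma is_cderivD k m (f g : 'rV[C]_k -> 'rV[C]_m) p Lf Lg :
  is_cderiv f p Lf -> is_cderiv g p Lg -> is_cderiv (fun x => f x + g x) p (Lf + Lg).
Proof.
move=> Hf Hg eps e0; have e2 : 0 < eps / 2 by rewrite divr_gt0.
apply: near0_mono (near0_and (Hf _ e2) (Hg _ e2)) => h [hf hg].
have -> : f (p + h) + g (p + h) - (f p + g p) - h *m (Lf + Lg) =
    (f (p + h) - f p - h *m Lf) + (g (p + h) - g p - h *m Lg).
  by rewrite mulmxDr; apply/rowP => j; rewrite !mxE; ring.
by apply: le_trans (rnormD _ _) _; have := rnorm_ge0 h; lra.
Qed.

Lemma is_cderiv_mulmxr k m l (f : 'rV[C]_k -> 'rV[C]_m) p L (A : 'M[C]_(m, l)) :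
  is_cderiv f p L -> is_cderiv (fun x => f x *m A) p (L *m A).
Proof.
move=> Hf eps e0; have A0 := mxnorm_ge0 A.
have e1 : 0 < eps / (mxnorm A + 1) by rewrite divr_gt0 // ltr_wpDl.
apply: near0_mono (Hf _ e1) => h hf.
rewrite mulmxA -!mulmxBl; apply: le_trans (rnorm_mulmx _ _) _.
apply: le_trans (ler_wpM2l A0 hf) _; rewrite mulrA ler_wpM2r ?rnorm_ge0 //.
by rewrite ler_mul_divDr1 // ltW.
Qed.

Lemma is_cderiv_comp_mulmx k k' m (f : 'rV[C]_k' -> 'rV[C]_m) p L (P : 'M[C]_(k, k')) :
  is_cderiv f (p *m P) L -> is_cderiv (fun x => f (x *m P)) p (P *m L).
Proof.
move=> Hf eps e0; have P0 := mxnorm_ge0 P.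
have e1 : 0 < eps / (mxnorm P + 1) by rewrite divr_gt0 // ltr_wpDl.
apply: near0_mono (near0_mulmx P (Hf _ e1)) => h hf.
rewrite mulmxDl mulmxA; apply: le_trans hf _.
apply: le_trans (ler_wpM2l (ltW e1) (rnorm_mulmx _ _)) _.
by rewrite mulrA ler_wpM2r ?rnorm_ge0 // mulrC ler_mul_divDr1 // ltW.
Qed.

Lemma is_cderiv_increment k m (f : 'rV[C]_k -> 'rV[C]_m) p L : is_cderiv f p L ->
  near0 (fun h => rnorm (f (p + h) - f p) <= (mxnorm L + 1) * rnorm h).
Proof.
move=> /(_ 1 ltr01); apply: near0_mono => h hf.
rewrite -[f _ - _](subrK (h *m L)); apply: le_trans (rnormD _ _) _.
by have := rnorm_mulmx h L; lra.
Qed.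

Section Bilinear.
Variables (a b c : nat) (B : 'rV[C]_a -> 'rV[C]_b -> 'rV[C]_c) (K : R).
Hypothesis K_ge0 : 0 <= K.
Hypothesis rnorm_bilinear : forall x y, rnorm (B x y) <= K * rnorm x * rnorm y.
Hypothesis bilinearDl : forall x1 x2 y, B (x1 + x2) y = B x1 y + B x2 y.
Hypothesis bilinearDr : forall x y1 y2, B x (y1 + y2) = B x y1 + B x y2.

Lemma bilinearBl x1 x2 y : B (x1 - x2) y = B x1 y - B x2 y.
Proof. by rewrite -[in B x1 y](subrK x2 x1) (bilinearDl (x1 - x2)) addrK. Qed.

Lemma bilinearBr x y1 y2 : B x (y1 - y2) = B x y1 - B x y2.
Proof. by rewrite -[in B x y1](subrK y2 y1) (bilinearDr _ (y1 - y2)) addrK. Qed.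

Lemma bilinear_remainder x y u v u0 v0 :
  B (x + u) (y + v) - B x y - (B u0 y + B x v0) = B x (v - v0) + B (u - u0) y + B u v.
Proof. by rewrite bilinearBl bilinearBr bilinearDl !bilinearDr; apply/rowP => j; rewrite !mxE; ring. Qed.

Lemma is_cderiv_bilinear k (f : 'rV[C]_k -> 'rV[C]_a) (g : 'rV[C]_k -> 'rV[C]_b) p Lf Lg L :
  (forall h, h *m L = B (h *m Lf) (g p) + B (f p) (h *m Lg)) ->
  is_cderiv f p Lf -> is_cderiv g p Lg -> is_cderiv (fun x => B (f x) (g x)) p L.
Proof.
move=> HL Hf Hg eps e0.
set X := K * (rnorm (f p) + rnorm (g p)).
set Y := K * (mxnorm Lf + 1) * (mxnorm Lg + 1).
have X0 : 0 <= X by rewrite mulr_ge0 // addr_ge0 ?rnorm_ge0.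
have Y0 : 0 <= Y by rewrite !mulr_ge0 // addr_ge0 ?mxnorm_ge0.
have [e1 e2] : 0 < eps / 2 / (X + 1) /\ 0 < eps / 2 / (Y + 1).
  by rewrite !divr_gt0 // ?ltr_wpDl.
have := near0_and (near0_and (Hf _ e1) (Hg _ e1))
  (near0_and (near0_and (is_cderiv_increment Hf) (is_cderiv_increment Hg)) (near0_lt e2)).
apply: near0_mono => h [[rf rg] [[df dg] hsmall]].
set Df := f (p + h) - f p in df rf *; set Dg := g (p + h) - g p in dg rg *.
have -> : B (f (p + h)) (g (p + h)) - B (f p) (g p) - h *m L =
    B (f p) (Dg - h *m Lg) + B (Df - h *m Lf) (g p) + B Df Dg.
  by rewrite HL -bilinear_remainder /Df /Dg !subrKC.
set e := eps / 2 / (X + 1) in e1 rf rg; have r0 := rnorm_ge0 h.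
have t1 : rnorm (B (f p) (Dg - h *m Lg)) <= K * rnorm (f p) * (e * rnorm h).
  by apply: le_trans (rnorm_bilinear _ _) _; rewrite ler_wpM2l // mulr_ge0 ?rnorm_ge0.
have t2 : rnorm (B (Df - h *m Lf) (g p)) <= K * (e * rnorm h) * rnorm (g p).
  by apply: le_trans (rnorm_bilinear _ _) _; rewrite ler_wpM2r ?rnorm_ge0 // ler_wpM2l.
have t3 : rnorm (B Df Dg) <= Y * rnorm h * rnorm h.
  apply: le_trans (rnorm_bilinear _ _) _; rewrite -mulrA.
  have -> : Y * rnorm h * rnorm h = K * ((mxnorm Lf + 1) * rnorm h * ((mxnorm Lg + 1) * rnorm h)).
    by rewrite /Y; ring.
  by rewrite ler_wpM2l // ler_pM ?rnorm_ge0.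
have Xe : X * e * rnorm h <= eps / 2 * rnorm h.
  by rewrite ler_wpM2r // ler_mul_divDr1 // divr_ge0 // ltW.
have Yh : Y * rnorm h * rnorm h <= eps / 2 * rnorm h.
  rewrite ler_wpM2r //; apply: le_trans (ler_wpM2l Y0 (ltW hsmall)) _.
  by rewrite ler_mul_divDr1 // divr_ge0 // ltW.
have XE : K * rnorm (f p) * (e * rnorm h) + K * (e * rnorm h) * rnorm (g p) = X * e * rnorm h.
  by rewrite /X; ring.
apply: le_trans (rnormD _ _) _; apply: le_trans (lerD (rnormD _ _) (lexx _)) _.
lra.
Qed.
End Bilinear.

Lemma is_cderiv_const k m (v : 'rV[C]_m) (p : 'rV[C]_k) : is_cderiv (fun _ => v) p 0.
Proof. by apply: is_cderiv_linear => h; rewrite subrr mulmx0. Qed.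

Lemma is_cderivZ k m (f : 'rV[C]_k -> 'rV[C]_m) p L c :
  is_cderiv f p L -> is_cderiv (fun x => c *: f x) p (c *: L).
Proof.
move=> /(is_cderiv_mulmxr c%:M); rewrite mul_mx_scalar.
by apply: is_cderiv_ext => x; rewrite mul_mx_scalar.
Qed.

Lemma is_cderivB k m (f g : 'rV[C]_k -> 'rV[C]_m) p Lf Lg :
  is_cderiv f p Lf -> is_cderiv g p Lg -> is_cderiv (fun x => f x - g x) p (Lf - Lg).
Proof.
move=> Hf /(is_cderivZ (-1)) Hg; have := is_cderivD Hf Hg.
by rewrite scaleN1r; apply: is_cderiv_ext => x; rewrite scaleN1r.
Qed.

Lemma is_cderiv_row_mx k m l (f : 'rV[C]_k -> 'rV[C]_m) (g : 'rV[C]_k -> 'rV[C]_l) p Lf Lg :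
  is_cderiv f p Lf -> is_cderiv g p Lg ->
  is_cderiv (fun x => row_mx (f x) (g x)) p (row_mx Lf Lg).
Proof.
move=> /(is_cderiv_mulmxr (row_mx 1%:M (0 : 'M_(m, l)))) Hf.
move=> /(is_cderiv_mulmxr (row_mx (0 : 'M_(l, m)) 1%:M)) Hg.
have E j (A : 'M[C]_(j, m)) (B : 'M[C]_(j, l)) :
    A *m row_mx 1%:M 0 + B *m row_mx 0 1%:M = row_mx A B.
  by rewrite !mul_mx_row !mulmx1 !mulmx0 add_row_mx addr0 add0r.
by move: (is_cderivD Hf Hg); rewrite E; apply: is_cderiv_ext => x; rewrite E.
Qed.

Lemma mulmx_col1l j m l (A : 'M[C]_(j, m + l)) : A *m col_mx 1%:M 0 = lsubmx A.
Proof. by rewrite -{1}(hsubmxK A) mul_row_col mulmx1 mulmx0 addr0. Qed.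

Lemma mulmx_col1r j m l (A : 'M[C]_(j, m + l)) : A *m col_mx 0 1%:M = rsubmx A.
Proof. by rewrite -{1}(hsubmxK A) mul_row_col mulmx1 mulmx0 add0r. Qed.

Lemma is_cderiv_lsubmx k m l (f : 'rV[C]_k -> 'rV[C]_(m + l)) p L :
  is_cderiv f p L -> is_cderiv (fun x => lsubmx (f x)) p (lsubmx L).
Proof.
move=> /(is_cderiv_mulmxr (col_mx 1%:M 0)); rewrite mulmx_col1l.
by apply: is_cderiv_ext => x; rewrite mulmx_col1l.
Qed.

Lemma is_cderiv_rsubmx k m l (f : 'rV[C]_k -> 'rV[C]_(m + l)) p L :
  is_cderiv f p L -> is_cderiv (fun x => rsubmx (f x)) p (rsubmx L).
Proof.
move=> /(is_cderiv_mulmxr (col_mx 0 1%:M)); rewrite mulmx_col1r.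
by apply: is_cderiv_ext => x; rewrite mulmx_col1r.
Qed.

Lemma is_cderiv_lsubmx_id m l (q : 'rV[C]_(m + l)) :
  is_cderiv (fun x => lsubmx x) q (col_mx 1%:M 0).
Proof. by apply: is_cderiv_linear => h; rewrite mulmx_col1l linearD /= addrC addKr. Qed.

Lemma is_cderiv_comp_rsubmx m l j (f : 'rV[C]_l -> 'rV[C]_j) (q : 'rV[C]_(m + l)) L :
  is_cderiv f (rsubmx q) L -> is_cderiv (fun x => f (rsubmx x)) q (col_mx 0 L).
Proof.
rewrite -mulmx_col1r => /is_cderiv_comp_mulmx.
rewrite mul_col_mx mul0mx mul1mx; apply: is_cderiv_ext => x; by rewrite mulmx_col1r.
Qed.

Lemma mul_rV1_mx m (x : 'rV[C]_1) (y : 'rV[C]_m) : x *m y = x 0 0 *: y.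
Proof. by rewrite [x]mx11_scalar mul_scalar_mx mxE eqxx mulr1n. Qed.

Lemma is_cderiv_scale k m (s : 'rV[C]_k -> 'rV[C]_1) (g : 'rV[C]_k -> 'rV[C]_m) p Ls Lg :
  is_cderiv s p Ls -> is_cderiv g p Lg ->
  is_cderiv (fun x => s x 0 0 *: g x) p (Ls *m g p + s p 0 0 *: Lg).
Proof.
apply: (is_cderiv_bilinear (B := fun x y => x 0 0 *: y) (K := 1)) => //.
- by move=> x y; rewrite rnormZ rnorm11 mul1r.
- by move=> x1 x2 y; rewrite mxE scalerDl.
- by move=> x y1 y2; rewrite scalerDr.
- by move=> h; rewrite mulmxDr mulmxA mul_rV1_mx scalemxAr.
Qed.

Lemma trmx11 (A : 'M[C]_1) : A^T = A.
Proof. by rewrite [A]mx11_scalar tr_scalar_mx. Qed.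

Lemma mulmx_trC m (x y : 'rV[C]_m) : x *m y^T = y *m x^T.
Proof. by rewrite -[LHS]trmx11 trmx_mul trmxK. Qed.

Lemma mxnorm_tr m (y : 'rV[C]_m) : mxnorm y^T = rnorm y.
Proof. by apply: eq_bigr => i _; rewrite big_ord1 mxE. Qed.

Lemma is_cderiv_dot k m (f g : 'rV[C]_k -> 'rV[C]_m) p Lf Lg :
  is_cderiv f p Lf -> is_cderiv g p Lg ->
  is_cderiv (fun x => f x *m (g x)^T) p (Lf *m (g p)^T + Lg *m (f p)^T).
Proof.
apply: (is_cderiv_bilinear (B := fun x y => x *m y^T) (K := 1)) => //.
- by move=> x y; rewrite mul1r mulrC -(mxnorm_tr y); exact: rnorm_mulmx.
- by move=> x1 x2 y; rewrite mulmxDl.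
- by move=> x y1 y2; rewrite linearD mulmxDr.
- by move=> h; rewrite mulmxDr !mulmxA [h *m Lg *m _]mulmx_trC.
Qed.

End Derivative.

Section Symplectic.
Variable R : realType.
Local Notation C := R[i].

Lemma OmegaE k (x y : 'rV[C]_(k + k)) :
  Omega x y = (zpart x *m (wpart y)^T - zpart y *m (wpart x)^T) 0 0.
Proof. by rewrite /Omega !mxE -sumrB; apply: eq_bigr => i _; rewrite !mxE. Qed.

Lemma liouvilleE k (x a : 'rV[C]_(k + k)) :
  liouville x a = (wpart x *m (zpart a)^T) 0 0.
Proof. by rewrite /liouville !mxE; apply: eq_bigr => i _; rewrite !mxE. Qed.

Lemma zpart_row_mx k (a b : 'rV[C]_k) : zpart (row_mx a b) = a.
Proof. exact: row_mxKl. Qed.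

Lemma wpart_row_mx k (a b : 'rV[C]_k) : wpart (row_mx a b) = b.
Proof. exact: row_mxKr. Qed.

Lemma OmegaN k (x y : 'rV[C]_(k + k)) : Omega y x = - Omega x y.
Proof. by rewrite /Omega -sumrN; apply: eq_bigr => i _; rewrite opprB. Qed.

Lemma Omega_diag k (x : 'rV[C]_(k + k)) : Omega x x = 0.
Proof. by rewrite /Omega big1 // => i _; rewrite subrr. Qed.

Lemma Omega_linearl k (s t : C) (x y z : 'rV[C]_(k + k)) :
  Omega (s *: x + t *: y) z = s * Omega x z + t * Omega y z.
Proof.
rewrite /Omega /zpart /wpart !mulr_sumr -big_split /=.
by apply: eq_bigr => i _; rewrite !mxE; ring.
Qed.

Lemma Omega_linearr k (s t : C) (x y z : 'rV[C]_(k + k)) :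
  Omega z (s *: x + t *: y) = s * Omega z x + t * Omega z y.
Proof. by rewrite OmegaN Omega_linearl ![Omega _ z]OmegaN; ring. Qed.

Lemma Omega_row_mx1 n (a0 b0 a0' b0' : 'rV[C]_1) (a b a' b' : 'rV[C]_n) :
  Omega (row_mx (row_mx a0 a) (row_mx b0 b)) (row_mx (row_mx a0' a') (row_mx b0' b')) =
  (a0 *m b0'^T - a0' *m b0^T) 0 0 + Omega (row_mx a b) (row_mx a' b').
Proof.
rewrite !OmegaE /zpart /wpart !row_mxKl !row_mxKr !tr_row_mx !mul_row_col.
by rewrite !mxE; ring.
Qed.

End Symplectic.

Section ConeOverSpecialKaehlerPair.
Variables (R : realType) (n : nat).
Local Notation C := R[i].
Variables (phi : 'rV[C]_n -> 'rV[C]_(n + n)) (dphi : 'rV[C]_n -> 'M[C]_(n, n + n)).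
Variables (F : 'rV[C]_n -> 'rV[C]_1) (dF : 'rV[C]_n -> 'M[C]_(n, 1)).

Definition w0 p : 'rV[C]_1 := 2 *: F p - zpart (phi p) *m (wpart (phi p))^T.

Definition dw0 p : 'M[C]_(n, 1) :=
  2 *: dF p - (lsubmx (dphi p) *m (wpart (phi p))^T + rsubmx (dphi p) *m (zpart (phi p))^T).

Definition Phi1 p : 'rV[C]_((1 + n) + (1 + n)) :=
  row_mx (row_mx 1 (zpart (phi p))) (row_mx (w0 p) (wpart (phi p))).

Definition dPhi1 p : 'M[C]_(n, (1 + n) + (1 + n)) :=
  row_mx (row_mx 0 (lsubmx (dphi p))) (row_mx (dw0 p) (rsubmx (dphi p))).

Definition dPhi q : 'M[C]_(1 + n, (1 + n) + (1 + n)) :=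
  col_mx (Phi1 (ptof q)) (z0of q *: dPhi1 (ptof q)).

Lemma PhiE q : Phi phi F q = z0of q *: Phi1 (ptof q).
Proof. by []. Qed.

Lemma Phi_equivariant l q : Phi phi F (cstar_act l q) = l *: Phi phi F q.
Proof. by rewrite !PhiE /z0of /ptof /cstar_act row_mxKl row_mxKr mxE scalerA. Qed.

Lemma Phi1_is_cderiv p :
  is_cderiv phi p (dphi p) -> is_cderiv F p (dF p) -> is_cderiv Phi1 p (dPhi1 p).
Proof.
move=> Hphi HF.
have Hz := is_cderiv_lsubmx Hphi.
have Hw := is_cderiv_rsubmx Hphi.
apply: is_cderiv_row_mx (is_cderiv_row_mx (is_cderiv_const _ _) Hz) _.
apply: (is_cderiv_row_mx _ Hw).
exact: is_cderivB (is_cderivZ _ HF) (is_cderiv_dot Hz Hw).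
Qed.

Lemma Phi_is_cderiv q :
  is_cderiv Phi1 (ptof q) (dPhi1 (ptof q)) -> is_cderiv (Phi phi F) q (dPhi q).
Proof.
move=> /is_cderiv_comp_rsubmx /(is_cderiv_scale (is_cderiv_lsubmx_id q)).
rewrite mul_col_mx mul1mx mul0mx scale_col_mx scaler0 add_col_mx addr0 add0r.
exact: is_cderiv_ext.
Qed.

Lemma mulmx_dPhi1 p (v : 'rV[C]_n) : v *m dPhi1 p =
  row_mx (row_mx 0 (v *m lsubmx (dphi p))) (row_mx (v *m dw0 p) (v *m rsubmx (dphi p))).
Proof. by rewrite !mul_mx_row mulmx0. Qed.

Lemma mulmx_dPhi q (u : 'rV[C]_(1 + n)) :
  u *m dPhi q = lsubmx u 0 0 *: Phi1 (ptof q) + z0of q *: (rsubmx u *m dPhi1 (ptof q)).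
Proof. by rewrite -{1}(hsubmxK u) mul_row_col mul_rV1_mx scalemxAr. Qed.

Lemma dPhi_row_free q :
  z0of q != 0 -> row_free (dphi (ptof q)) -> row_free (dPhi q).
Proof.
move=> z0_neq0 dphi_free; apply: inj_row_free => u.
rewrite mulmx_dPhi mulmx_dPhi1 => dPhi_u0.
have u00 : lsubmx u 0 0 = 0.
  have := congr1 (fun X => lsubmx (lsubmx X) 0 0) dPhi_u0.
  by rewrite /= !linearD !linearZ /= !row_mxKl !mxE mulr1 mulr0 addr0.
move: dPhi_u0; rewrite u00 scale0r add0r => /eqP.
rewrite scalemx_eq0 (negPf z0_neq0) !row_mx_eq0 => /andP[/andP[_ /eqP vz0] /andP[_ /eqP vw0]].
have v0 : rsubmx u = 0.
  apply/eqP; rewrite -(mulmx_free_eq0 _ dphi_free) -[dphi _]hsubmxK mul_mx_row.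
  by rewrite vz0 vw0 row_mx0.
by rewrite -[u]hsubmxK v0 [lsubmx u]mx11_scalar u00 raddf0 row_mx0.
Qed.

Lemma Omega_Phi1_dPhi1 p v :
  (v *m dF p) 0 0 = liouville (phi p) (v *m dphi p) -> Omega (Phi1 p) (v *m dPhi1 p) = 0.
Proof.
move=> dF_liouville.
have vdF : v *m dF p = wpart (phi p) *m (v *m lsubmx (dphi p))^T.
  by rewrite [LHS]mx11_scalar [RHS]mx11_scalar dF_liouville liouvilleE /zpart mulmx_lsub.
rewrite mulmx_dPhi1 Omega_row_mx1 OmegaE !zpart_row_mx !wpart_row_mx.
rewrite mul1mx mul0mx subr0 trmx11 /dw0 mulmxBr mulmxDr -scalemxAr !mulmxA vdF.
rewrite [_ *m lsubmx _ *m _]mulmx_trC [_ *m rsubmx _ *m _]mulmx_trC.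
set X := wpart (phi p) *m _; set Y := zpart (phi p) *m _.
by rewrite !mxE; ring.
Qed.

Lemma Omega_dPhi1 p u v :
  Omega (u *m dPhi1 p) (v *m dPhi1 p) = Omega (u *m dphi p) (v *m dphi p).
Proof.
rewrite !mulmx_dPhi1 Omega_row_mx1 !mul0mx subrr mxE add0r.
by rewrite -[dphi p]hsubmxK !mul_mx_row !row_mxKl !row_mxKr.
Qed.

Lemma dPhi_isotropic q :
  (forall u v, Omega (u *m dphi (ptof q)) (v *m dphi (ptof q)) = 0) ->
  (forall v, (v *m dF (ptof q)) 0 0 = liouville (phi (ptof q)) (v *m dphi (ptof q))) ->
  forall u v, Omega (u *m dPhi q) (v *m dPhi q) = 0.
Proof.
move=> dphi_lag dF_liouville u v.
rewrite !mulmx_dPhi Omega_linearl !Omega_linearr Omega_diag Omega_dPhi1 dphi_lag.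
by rewrite [Omega _ (Phi1 _)]OmegaN !Omega_Phi1_dPhi1 //; ring.
Qed.

End ConeOverSpecialKaehlerPair.

Theorem mainTheorem9 (R : realType) (n : nat) (U : 'rV[R[i]]_n -> Prop)
  (phi : 'rV[R[i]]_n -> 'rV[R[i]]_(n + n))
  (dphi : 'rV[R[i]]_n -> 'M[R[i]]_(n, n + n))
  (F : 'rV[R[i]]_n -> 'rV[R[i]]_1) (dF : 'rV[R[i]]_n -> 'M[R[i]]_(n, 1)) :
  copen U ->
  special_kaehler_pair U phi dphi F dF ->
  (* C^*-equivariance *)
  (forall (l : R[i]) (q : 'rV[R[i]]_(1 + n)), l != 0 ->
      Phi phi F (cstar_act l q) = l *: Phi phi F q) /\
  (* holomorphic Lagrangian immersion of \hat M into (C^(2n+2), \hat Omega) *)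
  (exists dPhi : 'rV[R[i]]_(1 + n) -> 'M[R[i]]_(1 + n, (1 + n) + (1 + n)),
      holo_on (Mhat U) (Phi phi F) dPhi /\
      forall q, Mhat U q ->
        row_free (dPhi q) /\
        (forall u v : 'rV[R[i]]_(1 + n),
            Omega (u *m dPhi q) (v *m dPhi q) = 0)).
Proof.
move=> _ [phi_holo dphi_free dphi_lag _ [F_holo dF_liouville]].
split=> [l q _|]; first exact: Phi_equivariant.
exists (dPhi phi dphi F dF); split=> [q [_ Uq]|q [z0_neq0 Uq]].
  apply/is_cderivP/Phi_is_cderiv/Phi1_is_cderiv; apply/is_cderivP.
  - exact: phi_holo.
  - exact: F_holo.
split; first exact: dPhi_row_free (dphi_free _ Uq).
exact: dPhi_isotropic (dphi_lag _ Uq) (dF_liouville _ Uq).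
Qed.
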